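(* Let $p$ be an odd prime, $r\ge3$ with $p\nmid r$, $D=\mathrm{D}_{2r}$, and let $G=V\rtimes_\psi D$ with $V=\mathbb{Z}_p^d$ and $\psi:D\to\mathrm{GL}(V)$ irreducible and non-trivial. Let $A=\mathrm{Aut}(G)$. Then $A=\mathrm{Inn}_G(V)\rtimes\mathrm{N}_A(D)$, and $\mathrm{Inn}_G(V)\cong V$.
   Context: $\mathrm{D}_{2r}$ is the dihedral group of order $2r$; $V\rtimes_\psi D$ is the semidirect product where $D$ acts on $V=\mathbb{F}_p^d$ via the representation $\psi$ over $\mathbb{F}_p$. For $g\in G$, $\tilde g$ is the inner automorphism $h\mapsto ghg^{-1}$, and for $H\le G$, $\mathrm{Inn}_G(H)=\{\tilde h: h\in H\}\le\mathrm{Aut}(G)$. $\mathrm{N}_A(D)=\{f\in A: f(D)=D\}$. *)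

From mathcomp Require Import all_boot all_fingroup all_solvable.
Set Implicit Arguments. Unset Strict Implicit. Unset Printing Implicit Defensive.
Local Open Scope group_scope.

(* Inn_G(H) = { inner automorphism of G induced by h : h in H } as a subset of Aut G.
   conj_aut G h is the automorphism y |-> y ^ h = h^-1 y h of G; as h ranges over
   a group H, this is the same set as { y |-> h y h^-1 : h in H }. *)
Definition InnG (gT : finGroupType) (G : {group gT}) (H : {set gT}) : {set {perm gT}} :=
  [set conj_aut G h | h in H].

Definition NA (gT : finGroupType) (A : {set {perm gT}}) (D : {set gT}) :
  {set {perm gT}} := [set f in A | f @: D == D].

(* Since p does not divide |D| = 2r, V is a normal Hall subgroup of G, hence
   characteristic, and f(D) is again a complement to V for every automorphism f.
   By Schur-Zassenhaus f(D) = D^v for some v in V, so composing f with the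
   inner automorphism induced by v^-1 lands in N_A(D): A = Inn_G(V) N_A(D).
   Irreducibility and non-triviality of psi force C_V(D) = 1. If conjugation by
   v in V normalises D then [D, v] lies in V ∩ D = 1, so v is in C_V(D); this
   makes Inn_G(V) ∩ N_A(D) trivial and conjugation by V faithful. *)
From mathcomp Require Import all_boot all_fingroup all_solvable.
Set Implicit Arguments. Unset Strict Implicit. Unset Printing Implicit Defensive.
Local Open Scope group_scope.

Lemma NA_sub (gT : finGroupType) (A : {set {perm gT}}) (D : {set gT}) :
  NA A D \subset A.
Proof. by apply/subsetP => f /setIdP[]. Qed.

Section NormalizerInAut.
Variables (gT : finGroupType) (A : {group {perm gT}}) (D : {set gT}).

Lemma NA_group_set : group_set (NA A D).
Proof.
apply/group_setP; split.
  rewrite inE group1 /=; apply/eqP/setP => x.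
  apply/imsetP/idP => [[y Dy ->]|Dx]; first by rewrite perm1.
  by exists x; rewrite ?perm1.
move=> f g /setIdP[Af /eqP fD] /setIdP[Ag /eqP gD].
rewrite inE groupM //=; apply/eqP.
rewrite -[in RHS]gD -[in RHS]fD -imset_comp.
by apply: eq_imset => x; rewrite permM.
Qed.

Canonical NA_group := group NA_group_set.

End NormalizerInAut.

Section InnerAutomorphismsOfSubgroup.
Variables (gT : finGroupType) (G H : {group gT}).

Lemma InnG_morphim : H \subset 'N(G) -> InnG G H = conj_aut G @* H.
Proof. by move=> nGH; rewrite morphimEsub. Qed.

Lemma conj_aut_Aut x : x \in G -> conj_aut G x \in Aut G.
Proof.
move=> Gx; apply: (subsetP (Aut_conj_aut _ G)).
by rewrite mem_morphim // (subsetP (normG G)).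
Qed.

Lemma conj_autJ (f : {perm gT}) x :
  f \in Aut G -> x \in G -> conj_aut G x ^ f = conj_aut G (f x).
Proof.
move=> Af Gx; have Gfx : f x \in G := Aut_closed Af Gx.
apply: (eq_Aut (groupJ (conj_aut_Aut Gx) Af) (conj_aut_Aut Gfx)) => y Gy.
have Gf'y : f^-1 y \in G := Aut_closed (groupVr Af) Gy.
rewrite conjgE !permM !conj_autE //.
transitivity (autm Af (f^-1 y ^ x)) => //.
by rewrite morphJ //= autmE permKV.
Qed.

Lemma Aut_norm_InnG : H \char G -> Aut G \subset 'N(InnG G H).
Proof.
move=> chH; have sHG := char_sub chH.
have nGH := subset_trans sHG (normG G).
rewrite InnG_morphim //; apply/subsetP => f Af; rewrite inE.
apply/subsetP => _ /imsetP[_ /morphimP[x _ Hx ->] ->].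
have Hfx : f x \in H.
  by case/andP: chH => _ /forall_inP/(_ f Af)/subsetP; apply; apply: imset_f.
by rewrite conj_autJ ?(subsetP sHG) // mem_morphim ?(subsetP nGH).
Qed.

Lemma InnG_isog : H \subset G -> 'C_H(G) = 1 -> InnG G H \isog H.
Proof.
move=> sHG tiHcG; have nGH := subset_trans sHG (normG G).
have injInn : 'injm (restrm nGH (conj_aut G)).
  by rewrite ker_restrm ker_conj_aut tiHcG.
rewrite InnG_morphim // isog_sym.
by have := sub_isog (subxx H) injInn; rewrite morphim_restrm setIid.
Qed.

End InnerAutomorphismsOfSubgroup.

Section CoprimeSemidirectProduct.
Variables (gT : finGroupType) (G K H : {group gT}).
Hypotheses (defG : K ><| H = G) (coKH : coprime #|K| #|H|).

Lemma coprime_sdprod_char : K \char G.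
Proof.
have [nKG _ _ _ _] := sdprod_context defG.
have hallK : Hall G K.
  by rewrite /Hall (normal_sub nKG) -divgS ?normal_sub // -(sdprod_card defG) mulKn.
by rewrite -(normal_Hall_pcore (Hall_pi hallK) nKG) pcore_char.
Qed.

Lemma NA_norm_InnG : NA (Aut G) H \subset 'N(InnG G K).
Proof. exact: subset_trans (NA_sub _ _) (Aut_norm_InnG coprime_sdprod_char). Qed.

Lemma InnG_NA_TI : 'C_K(H) = 1 -> InnG G K :&: NA (Aut G) H = 1.
Proof.
move=> tiCKH; have [nKG sHG _ nKH tiKH] := sdprod_context defG.
have sKG := normal_sub nKG.
rewrite InnG_morphim ?(subset_trans sKG (normG G)) //.
apply/trivgP/subsetP => _ /setIP[/morphimP[v _ Kv ->] /setIdP[_ /eqP vH]].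
have : v \in 'C_K(H).
  rewrite inE Kv; apply/centP => h Hh.
  have Hhv : h ^ v \in H.
    by rewrite -(conj_autE (subsetP sKG v Kv) (subsetP sHG h Hh)) -vH imset_f.
  have : [~ h, v] \in K :&: H.
    rewrite inE; apply/andP; split.
      by rewrite commgEr groupM ?memJ_norm ?groupV ?(subsetP nKH).
    by rewrite commgEl groupM ?groupV.
  by rewrite tiKH => /set1P/eqP/commgP/commute_sym.
by rewrite tiCKH => /set1P->; rewrite morph1 inE.
Qed.

Lemma Aut_sub_InnG_NA : solvable K -> Aut G \subset InnG G K * NA (Aut G) H.
Proof.
move=> solK; have [nKG sHG mulKH nKH _] := sdprod_context defG.
have sKG := normal_sub nKG.
have nInnNA := NA_norm_InnG.
apply/subsetP => f Af.
(* Schur-Zassenhaus: f(H) is another complement to K, hence a K-conjugate of H. *)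
have [x Kx fH] : exists2 x, x \in K & f @: H = H :^ x.
  rewrite -(autmE Af) -morphimEsub //; apply: SchurZassenhaus_trans_sol => //.
    by rewrite mulKH (subset_trans (morphimS _ sHG)) ?im_autm.
  by rewrite card_injm ?injm_autm.
have Gx := subsetP sKG x Kx; have Nx := subsetP (normG G) x Gx.
have sHxG : H :^ x \subset G by rewrite -(conjGid Gx) conjSg.
rewrite -(normC nInnNA) -(mulgKV (conj_aut G x) f).
apply: mem_mulg; last by rewrite imset_f.
rewrite inE groupM ?groupV ?conj_aut_Aut //=.
apply/eqP; rewrite (eq_imset _ (permM f _)) imset_comp fH -morphV //.
rewrite -[RHS](conjsgK x H) /conjugate; apply: eq_in_imset => y Hxy.
by rewrite conj_autE ?groupV // (subsetP sHxG).
Qed.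

Theorem Aut_coprime_sdprod :
  solvable K -> 'C_K(H) = 1 -> InnG G K ><| NA (Aut G) H = Aut G.
Proof.
move=> solK tiCKH; have [nKG _ _ _ _] := sdprod_context defG.
have nGK := subset_trans (normal_sub nKG) (normG G).
have nInnNA := NA_norm_InnG.
have tiInnNA := InnG_NA_TI tiCKH.
rewrite InnG_morphim // in nInnNA tiInnNA *.
rewrite sdprodE //; apply/eqP.
by rewrite eqEsubset mul_subG ?Aut_conj_aut ?NA_sub //= -InnG_morphim ?Aut_sub_InnG_NA.
Qed.

End CoprimeSemidirectProduct.

Lemma acts_irreducibly_cent_trivial (gT : finGroupType) (D V : {group gT}) :
  acts_irreducibly D V 'J -> ~~ (D \subset 'C(V)) -> 'C_V(D) = 1.
Proof.
move=> irrV ncDV; case/mingroupP: irrV => /andP[_ nVD] minV.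
rewrite astabsJ in nVD.
apply/eqP; apply: contraR ncDV => ntC.
have nCD : D \subset 'N('C_V(D)) by rewrite normsI ?norms_cent ?normG.
have /minV eqCV : ('C_V(D) :!=: 1) && [acts D, on 'C_V(D) | 'J].
  by rewrite ntC astabsJ nCD.
by rewrite centsC -eqCV ?subsetIr ?subsetIl.
Qed.

Lemma odd_prime_p'nat_double p n :
  prime p -> odd p -> ~~ (p %| n) -> p^'.-nat n.*2.
Proof.
move=> pr_p odd_p pNn; rewrite p'natE // -mul2n Euclid_dvdM // negb_or pNn andbT.
by apply: contraL odd_p; rewrite dvdn_prime2 // => /eqP->.
Qed.

Theorem lemma5p1 (gT : finGroupType) (p r : nat) (G V D : {group gT}) :
  prime p -> odd p -> 2 < r -> ~~ (p %| r) ->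
  D \isog 'D_(r.*2) ->
  p.-abelem V ->
  V ><| D = G ->
  acts_irreducibly D V 'J ->
  ~~ (D \subset 'C(V)) ->
  InnG G V ><| NA (Aut G) D = Aut G /\ InnG G V \isog V.
Proof.
move=> pr_p odd_p r_gt2 pNr isoD abV defG irrV ncDV.
have [nVG sDG _ _ _] := sdprod_context defG.
have p'D : p^'.-nat #|D|.
  by rewrite (card_isog isoD) (card_dihedral (ltnW r_gt2)) odd_prime_p'nat_double.
have coVD : coprime #|V| #|D| := pnat_coprime (abelem_pgroup abV) p'D.
have tiCVD := acts_irreducibly_cent_trivial irrV ncDV.
split; first exact: Aut_coprime_sdprod defG coVD (abelian_sol (abelem_abelian abV)) tiCVD.
apply: InnG_isog; first exact: normal_sub nVG.
by apply/trivgP; rewrite -tiCVD setIS ?centS.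
Qed.
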